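(* Let $(X,\tau)$ be a locally strongly compact topological space and $A$ a pre-closed subset of $X$. Then $A$ with the relative topology is locally strongly compact, in the sense that for every $x\in A$ there is $G\subseteq A$ and a pre-open set $V$ of $X$ with $x\in V\cap A\subseteq G$ and such that every cover of $G$ by sets of the form $W\cap G$, $W$ pre-open in $X$, has a finite subcover.
   Context: A subset $B$ of a topological space is pre-open if $B\subseteq Int(Cl(B))$, pre-closed if its complement is pre-open. A subset $B\subseteq X$ is strongly compact (as a subspace) if every cover of $B$ by sets $W\cap B$, $W$ pre-open in $X$, has a finite subcover. $X$ is locally strongly compact if for every $x\in X$ there is $B\subseteq X$ and a pre-open $V$ with $x\in V\subseteq B$ and $B$ strongly compact. *)

From HB Require Import structures.
From mathcomp Require Import all_boot all_algebra.
From mathcomp Require Import all_classical all_reals all_analysis.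
Set Implicit Arguments. Unset Strict Implicit. Unset Printing Implicit Defensive.
Local Open Scope classical_set_scope.

Definition preopen (X : topologicalType) (B : set X) : Prop :=
  B `<=` interior (closure B).

Definition preclosed (X : topologicalType) (B : set X) : Prop :=
  preopen (~` B).

Definition strongly_compact (X : topologicalType) (B : set X) : Prop :=
  forall (I : Type) (W : I -> set X),
    (forall i, preopen (W i)) ->
    B `<=` \bigcup_i (W i `&` B) ->
    exists D : set I, finite_set D /\ B `<=` \bigcup_(i in D) (W i `&` B).

Definition locally_strongly_compact (X : topologicalType) : Prop :=
  forall x : X, exists (B V : set X),
    preopen V /\ V x /\ V `<=` B /\ strongly_compact B.

From mathcomp Require Import all_boot all_algebra.
From mathcomp Require Import all_classical all_reals all_analysis.
Local Open Scope classical_set_scope.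

(* Trace of a strongly compact set on a pre-closed set is strongly compact:
   a pre-open cover of [B `&` A], enlarged by the pre-open set [~` A], covers
   [B]; a finite subcover of [B] minus [~` A] covers [B `&` A].  Taking the
   trace of a strongly compact neighbourhood of [x] then gives the theorem. *)

Lemma strongly_compactI_preclosed (X : topologicalType) (B A : set X) :
  strongly_compact B -> preclosed A -> strongly_compact (B `&` A).
Proof.
move=> sB pA I W pW covBA.
pose WA (o : option I) := if o is Some i then W i else ~` A.
have pWA o : preopen (WA o) by case: o => [i|] /=; [exact: pW | exact: pA].
have covB : B `<=` \bigcup_o (WA o `&` B).
  move=> b Bb; have [Ab|nAb] := pselect (A b).
    have [i _ [Wib _]] := covBA b (conj Bb Ab).
    by exists (Some i).
  by exists None.
have [D [finD covD]] := sB _ WA pWA covB.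
exists (Some @^-1` D); split.
  by apply: finite_preimage => // i j _ _ [].
move=> b [Bb Ab]; have [[i|] Di [WAb _]] := covD b Bb; last by [].
by exists i.
Qed.

Theorem corollary4p1 (X : topologicalType) (A : set X) :
  locally_strongly_compact X -> preclosed A ->
  forall x : X, A x ->
    exists (G V : set X),
      G `<=` A /\ preopen V /\ (V `&` A) x /\ V `&` A `<=` G /\
      strongly_compact G.
Proof.
move=> lsc pA x Ax.
have [B [V [pV [Vx [VB sB]]]]] := lsc x.
exists (B `&` A), V; split; first by move=> y [].
split=> //; split=> //; split; first by move=> y [/VB].
exact: strongly_compactI_preclosed.
Qed.
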